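(* Let $t$ have a persistent craving representation $(\rhd,\nu,\phi)$ and let $x\in X$. Then $$\nu_{X\setminus\{x\}}(\succ_x)=\frac{\nu(\succ_x)}{1-\phi(M(\rhd,X\setminus\{x\}),x)\,(1-\nu(\succ_x))}.$$
   Context: $X$ is a finite set with at least two elements, $\mathcal{L}(X)$ its linear orders, $M(\succ,A)$ the $\succ$-maximal element of $A$. Given a linear order $\rhd$, the craving preferences $\{\succ_x\}_{x\in X}$ are: $x\succ_x y$ for all $y\ne x$, and for $y,z\ne x$, $y\succ_x z$ iff $y\rhd z$. A distribution $\nu$ supported on $\{\succ_x\}$ is craving monotonic w.r.t. $\rhd$ if $x\rhd y$ implies $\nu(\succ_x)>\nu(\succ_y)>0$. A persistence function is $\phi:X^2\to[0,1)$ with $\phi(x,x)=0$, $\phi(x,y)>0$ for $x\ne y$. A persistent craving representation $(\rhd,\nu,\phi)$, with $\nu$ craving monotonic, is the transition function $t(x,\succ_y)=\phi(x,y)\delta_{\succ_y}+(1-\phi(x,y))\nu$ and $t(x,\succ)=\nu$ for $\succ$ outside the support of $\nu$. For nonempty $A\subseteq X$, $\nu_A$ is the unique stationary distribution of the Markov chain on $\mathcal{L}(X)$ with $m_A(\succ,\succ')=t_{\succ'}(M(\succ,A),\succ)$. *)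

From mathcomp Require Import all_boot all_order all_algebra.
Set Implicit Arguments. Unset Strict Implicit. Unset Printing Implicit Defensive.
Import Order.TTheory GRing.Theory Num.Theory.
Local Open Scope ring_scope.

Section Defs.
Variable X : finType.

(* A strict linear order on X, encoded as a boolean relation r x y = "x > y". *)
Definition strict_linear (r : {ffun X -> {ffun X -> bool}}) : bool :=
  [&& [forall x, ~~ r x x],
      [forall x, forall y, (x != y) ==> (r x y || r y x)] &
      [forall x, forall y, forall z, r x y ==> r y z ==> r x z]].

Definition linord := {r : {ffun X -> {ffun X -> bool}} | strict_linear r}.

Definition lrel (r : linord) (x y : X) : bool := val r x y.

(* M(r, A): the r-maximal element of A (d is a dummy default, only used when A is empty). *)
Definition M (r : linord) (A : {set X}) (d : X) : X :=
  odflt d [pick y in A | [forall z in A, (z != y) ==> lrel r y z]].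

Definition crave_fun (rho : linord) (x : X) : {ffun X -> {ffun X -> bool}} :=
  [ffun y => [ffun z => ((y == x) && (z != x)) || [&& y != x, z != x & lrel rho y z]]].

Lemma crave_fun_linear rho x : strict_linear (crave_fun rho x).
Proof.
have /and3P [irr tot tr] := valP rho.
rewrite /lrel /=.
apply/and3P; split.
- apply/forallP => y; rewrite !ffunE.
  by case: (y =P x) => //= _; rewrite (forallP irr y).
- apply/forallP => y; apply/forallP => z; apply/implyP => nyz; rewrite !ffunE.
  case: (y =P x) => [eyx|/eqP nyx] /=; first by rewrite -eyx eq_sym nyz.
  case: (z =P x) => [->|/eqP nzx] //=; rewrite ?nyx ?nzx /=.
  by have := forallP (forallP tot y) z; rewrite nyz.
- apply/forallP => y; apply/forallP => z; apply/forallP => w.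
  rewrite !ffunE.
  case: (y =P x) => [->|/eqP nyx] /=.
    case: (z =P x) => [->|/eqP nzx]; case: (w =P x) => [->|/eqP nwx] /=; rewrite ?eqxx ?nzx ?nwx /= ?andbF ?orbF ?andbT /= ?implybT //.
  case: (z =P x) => [->|/eqP nzx]; case: (w =P x) => [->|/eqP nwx] /=;
    rewrite ?eqxx ?nzx ?nwx /= ?andbF ?orbF ?andbT /= ?implybT //.
  exact: (forallP (forallP (forallP tr y) z) w).
Qed.

Definition crave (rho : linord) (x : X) : linord :=
  exist _ (crave_fun rho x) (crave_fun_linear rho x).

Variable R : realFieldType.

Definition is_distr (mu : {ffun linord -> R}) : Prop :=
  (forall s, 0 <= mu s) /\ \sum_s mu s = 1.

Definition supported_on_craving (rho : linord) (nu : {ffun linord -> R}) : Prop :=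
  forall s, (forall x, s != crave rho x) -> nu s = 0.

Definition craving_monotonic (rho : linord) (nu : {ffun linord -> R}) : Prop :=
  forall x y, lrel rho x y -> nu (crave rho y) < nu (crave rho x) /\ 0 < nu (crave rho y).

Definition persistence (phi : X -> X -> R) : Prop :=
  (forall x y, 0 <= phi x y /\ phi x y < 1) /\
  (forall x, phi x x = 0) /\
  (forall x y, x != y -> 0 < phi x y).

Definition trans (rho : linord) (nu : {ffun linord -> R}) (phi : X -> X -> R)
  (y : X) (s : linord) : {ffun linord -> R} :=
  [ffun s' => if [pick z | s == crave rho z] is Some z
              then phi y z * (s' == s)%:R + (1 - phi y z) * nu s'
              else nu s'].

Definition chain (rho : linord) (nu : {ffun linord -> R}) (phi : X -> X -> R)
  (A : {set X}) (d : X) (s s' : linord) : R :=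
  trans rho nu phi (M s A d) s s'.

Definition stationary (m : linord -> linord -> R) (mu : {ffun linord -> R}) : Prop :=
  is_distr mu /\ forall s', mu s' = \sum_s mu s * m s s'.

End Defs.

(* In the chain on X \ {x}, the only way to be at >_x next period is either to
   persist in >_x, which from >_x happens with probability
   p = phi(M(rho, X \ {x}), x) since >_x and rho share their maximum on X \ {x},
   or to be redrawn from nu.  A state >_z with z <> x has maximum z on X \ {x}
   and never persists in >_x since phi(z, z) = 0.  Hence the stationary mass q of
   >_x satisfies q = q p + (1 - q p) nu(>_x), which is solved for q.  Beyond
   the stationarity of q, this uses only nu >= 0, phi < 1 and phi(z, z) = 0. *)
From mathcomp Require Import all_boot all_order all_algebra.
From mathcomp Require Import ring lra.
Set Implicit Arguments. Unset Strict Implicit. Unset Printing Implicit Defensive.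
Import Order.TTheory GRing.Theory Num.Theory.
Local Open Scope ring_scope.

Section CravingOrders.
Variable X : finType.
Implicit Types (r rho : linord X) (A : {set X}).

Lemma M_eq_maximum r A d y :
  y \in A -> (forall w, w \in A -> w != y -> lrel r y w) -> M r A d = y.
Proof.
move=> yA y_max; rewrite /M; case: pickP => [y' /andP [y'A /forallP y'_max] | none] /=.
- case: (eqVneq y' y) => // ne.
  have y'y : lrel r y' y by move: (y'_max y); rewrite yA eq_sym ne.
  have yy' := y_max y' y'A ne.
  have /and3P [/forallP irr _ /forallP tr] := valP r.
  have := implyP (implyP (forallP (forallP (tr y') y) y') y'y) yy'.
  by rewrite (negbTE (irr y')).
- move: (none y); rewrite yA /= => /negbT/negP; case.
  by apply/forallP => w; apply/implyP => wA; apply/implyP; apply: y_max.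
Qed.

Lemma crave_inj rho : injective (crave rho).
Proof.
move=> z z' /(congr1 val) /= E; case: (eqVneq z z') => // ne.
have := congr1 (fun f : {ffun X -> {ffun X -> bool}} => f z z') E.
by rewrite /crave_fun !ffunE /= eqxx eq_sym ne (negbTE ne) /= eqxx.
Qed.

Lemma M_crave_in rho A d z : z \in A -> M (crave rho z) A d = z.
Proof.
move=> zA; apply: M_eq_maximum => // w _ wz.
by rewrite /lrel /= /crave_fun !ffunE eqxx wz.
Qed.

Lemma M_crave_notin rho A d x : x \notin A -> M (crave rho x) A d = M rho A d.
Proof.
move=> xA; rewrite /M; congr odflt; apply: eq_pick => y /=.
case yA: (y \in A) => //=; apply: eq_forallb => z.
case zA: (z \in A) => //=.
have [yx zx] : y != x /\ z != x by split; apply: contraNneq xA => <-.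
by rewrite /lrel /= /crave_fun !ffunE (negbTE yx) zx.
Qed.

End CravingOrders.

Section Transitions.
Variables (X : finType) (R : realFieldType).
Variables (rho : linord X) (nu : {ffun linord X -> R}) (phi : X -> X -> R).

Lemma trans_crave y z s' :
  trans rho nu phi y (crave rho z) s' =
    phi y z * (s' == crave rho z)%:R + (1 - phi y z) * nu s'.
Proof.
rewrite /trans ffunE; case: pickP => [z' /eqP /crave_inj -> // | none].
by have := none z; rewrite eqxx.
Qed.

Lemma trans_not_crave y s s' :
  (forall z, s != crave rho z) -> trans rho nu phi y s s' = nu s'.
Proof.
move=> not_crave; rewrite /trans ffunE; case: pickP => // z /eqP s_z.
by have := not_crave z; rewrite s_z eqxx.
Qed.

Lemma chain_setC1_crave x d :
  (forall z, phi z z = 0) ->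
  let c := crave rho x in let p := phi (M rho (~: [set x]) d) x in
  forall s, chain rho nu phi (~: [set x]) d s c =
    (s == c)%:R * p + (1 - (s == c)%:R * p) * nu c.
Proof.
move=> phi_diag c p s; rewrite /chain.
have [z /eqP -> | not_crave] := pickP (fun z => s == crave rho z); last first.
  rewrite trans_not_crave => [|z]; last by rewrite not_crave.
  by rewrite not_crave mul0r subr0 add0r mul1r.
have [-> | zx] := eqVneq z x.
  by rewrite M_crave_notin ?in_setC ?set11 // trans_crave -/c -/p eqxx mulr1 mul1r.
rewrite M_crave_in ?in_setC ?in_set1 // trans_crave phi_diag.
have -> : (crave rho z == c) = false by rewrite (inj_eq (@crave_inj _ rho)) (negbTE zx).
by rewrite !mul0r subr0 add0r mul1r.
Qed.

End Transitions.

Lemma stationary_mass_fixpoint (S : finType) (R : comPzRingType)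
    (m : S -> S -> R) (mu : S -> R) (c : S) (p v : R) :
  \sum_s mu s = 1 -> mu c = \sum_s mu s * m s c ->
  (forall s, m s c = (s == c)%:R * p + (1 - (s == c)%:R * p) * v) ->
  mu c = mu c * p + (1 - mu c * p) * v.
Proof.
move=> mu_sum mu_c m_c; rewrite {1}mu_c.
transitivity (\sum_s (mu s * v + (s == c)%:R * (mu s * p * (1 - v)))).
  by apply: eq_bigr => s _; rewrite m_c; ring.
rewrite big_split /= -mulr_suml mu_sum mul1r (bigD1 c) //= eqxx mul1r.
rewrite big1 ?addr0 => [|s /negbTE ->]; last by rewrite mul0r.
ring.
Qed.

Lemma persistence_fixpoint_solve (R : realFieldType) (q p v : R) :
  0 <= p < 1 -> 0 <= v -> q = q * p + (1 - q * p) * v ->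
  q = v / (1 - p * (1 - v)).
Proof.
move=> /andP [p0 p1] v0 q_eq.
have pv0 : 0 <= p * v by apply: mulr_ge0.
have den_neq0 : 1 - p * (1 - v) != 0 by rewrite gt_eqF // mulrBr mulr1; lra.
apply: (mulIf den_neq0); rewrite divfK //.
apply/subr0_eq; transitivity (q - (q * p + (1 - q * p) * v)); first ring.
by rewrite -q_eq subrr.
Qed.

Theorem proposition9 (X : finType) (R : realFieldType)
    (rho : linord X) (nu : {ffun linord X -> R}) (phi : X -> X -> R) (x : X) :
  (1 < #|X|)%N ->
  is_distr nu -> supported_on_craving rho nu -> craving_monotonic rho nu ->
  persistence phi ->
  forall nuA : {ffun linord X -> R},
    stationary (chain rho nu phi (~: [set x]) x) nuA ->
    nuA (crave rho x) =
      nu (crave rho x) /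
        (1 - phi (M rho (~: [set x]) x) x * (1 - nu (crave rho x))).
Proof.
move=> _ [nu_ge0 _] _ _ [phi_range [phi_diag _]] nuA [[_ nuA_sum] nuA_stat].
apply: persistence_fixpoint_solve => //.
- by have [-> ->] := phi_range (M rho (~: [set x]) x) x.
- exact: stationary_mass_fixpoint nuA_sum (nuA_stat _)
    (chain_setC1_crave rho nu x x phi_diag).
Qed.
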